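(* For every $\epsilon>0$ and $\delta\in(0,1)$, the minimax complexity of the stochastic global oracle for the finite-sum problem $\min_{\mathbf{w}\in\mathbb{R}^d}F(\mathbf{w})=\frac1n\sum_{i=1}^n f_i(\mathbf{w})$ over the class $\Sigma$ of all such finite sums (with arbitrary, not necessarily convex or smooth, individual functions, $F$ bounded below) satisfies $$\mathfrak{M}_{\Sigma,\mathsf{S}_f}(\epsilon,\delta)\le 2n^2\log(2n/\delta).$$
   Context: The stochastic global oracle $\mathsf{S}_f$, on each call, returns the entire function $f_i$ (a complete specification of it), for an index $i\sim\mathrm{Unif}([n])$ drawn independently at each call, without revealing $i$; computational cost other than the number of oracle calls is disregarded. For a function class $\mathcal F$ and oracle $\mathsf O$, let $\mathcal A(\mathsf O,k)$ be the class of algorithms issuing at most $k$ $\mathsf O$-queries, and $\mathbf{w}_{A(f)}$ the output of $A$ on $f$. Then $\mathfrak{M}_{\mathcal F,\mathsf O}(\epsilon,\delta)=\inf\{k\in\mathbb{N}:\exists A\in\mathcal A(\mathsf O,k)\text{ with }\sup_{f\in\mathcal F}\mathbb{P}(f(\mathbf{w}_{A(f)})-f^*>\epsilon)<\delta\}$, where $f^*$ is the infimum of $f$. *)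

From Stdlib Require Import Reals Lra Lia Arith List ClassicalEpsilon.
From Stdlib Require Fin.
Import ListNotations.
Open Scope R_scope.

Definition Vec (d : nat) : Type := Fin.t d -> R.

Definition Fn (d : nat) : Type := Vec d -> R.

(* F(w) = (1/n) * sum_{i=0}^{n-1} f_i(w)   (indices 0..n-1 encode [n]) *)
Definition finite_sum {d : nat} (n : nat) (f : nat -> Fn d) (w : Vec d) : R :=
  / INR n * fold_right Rplus 0 (map (fun i => f i w) (seq 0 n)).

Definition bounded_below {d : nat} (F : Fn d) : Prop :=
  exists b : R, forall w, b <= F w.

Definition is_inf {d : nat} (F : Fn d) (m : R) : Prop :=
  (forall w, m <= F w) /\ (forall b, (forall w, b <= F w) -> b <= m).

Fixpoint idx_seqs (n k : nat) : list (list nat) :=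
  match k with
  | O => [ [] ]
  | S k' => flat_map (fun i => map (cons i) (idx_seqs n k')) (seq 0 n)
  end.

Definition decide (P : Prop) : bool :=
  if excluded_middle_informative P then true else false.

(* Probability of event E when the k indices are i.i.d. uniform on [n]:
   (number of index sequences in E) / n^k. *)
Definition prob_idx (n k : nat) (E : list nat -> Prop) : R :=
  INR (length (filter (fun s => decide (E s)) (idx_seqs n k))) / INR (n ^ k).

(* An algorithm issuing k queries to the stochastic global oracle: it only sees
   the list of returned functions (f_{i_1}, ..., f_{i_k}), not the indices,
   and outputs a point.  Adaptivity is irrelevant since the oracle takes no
   input; issuing fewer than k queries is subsumed by ignoring samples. *)
Definition algorithm (d : nat) : Type := list (Fn d) -> Vec d.

Definition fails {d : nat} (n : nat) (f : nat -> Fn d) (eps : R)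
    (A : algorithm d) (s : list nat) : Prop :=
  forall m, is_inf (finite_sum n f) m ->
    finite_sum n f (A (map f s)) - m > eps.

Definition achieves (d n k : nat) (eps delta : R) : Prop :=
  exists A : algorithm d, exists eta : R, eta < delta /\
    forall f : nat -> Fn d, bounded_below (finite_sum n f) ->
      prob_idx n k (fails n f eps A) <= eta.

(* The algorithm only sees a multiset of functions, but that suffices to recover F
   once it knows, for each distinct function g drawn, the number c_g of indices i
   with f_i = g: then F = (1/n) Σ_g c_g g, and an ε-minimiser of it is returned.
   If the n components are pairwise distinct, seeing n distinct functions certifies
   c_g = 1, and by the coupon-collector bound some component is missed with
   probability at most n e^{-k/n}.  Otherwise there are at most n - 1/2 classes
   (namely Σ_i 1/c_i), and c_g is obtained by rounding n times the frequency of g;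
   by Hoeffding each rounding is wrong with probability at most 2 e^{-k/(2n²)},
   so a union bound over classes gives (2n - 1) e^{-k/(2n²)}.  For
   k = ⌊2n² ln(2n/δ)⌋ both bounds are below δ. *)

From Coquelicot Require Import Coquelicot.
From Stdlib Require Import Reals Lra Lia List ClassicalEpsilon FunctionalExtensionality ZArith.
Open Scope R_scope.

Definition sumR {A} (l : list A) (g : A -> R) : R :=
  fold_right (fun x acc => g x + acc) 0 l.

Lemma sumR_cons {A} (x : A) l g : sumR (x :: l) g = g x + sumR l g.
Proof. reflexivity. Qed.

Lemma sumR_app {A} (l1 l2 : list A) g : sumR (l1 ++ l2) g = sumR l1 g + sumR l2 g.
Proof. induction l1 as [|x l1 IH]; simpl; [lra|]. rewrite IH; lra. Qed.

Lemma sumR_map {A B} (h : A -> B) l g : sumR (map h l) g = sumR l (fun x => g (h x)).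
Proof. induction l as [|x l IH]; simpl; [|rewrite IH]; reflexivity. Qed.

Lemma sumR_flat_map {A B} (h : A -> list B) l g :
  sumR (flat_map h l) g = sumR l (fun x => sumR (h x) g).
Proof. induction l as [|x l IH]; simpl; [|rewrite sumR_app, IH]; reflexivity. Qed.

Lemma sumR_ext {A} (l : list A) g h : (forall x, In x l -> g x = h x) -> sumR l g = sumR l h.
Proof. induction l as [|x l IH]; simpl; intros H; [|rewrite H, IH]; auto. Qed.

Lemma sumR_le {A} (l : list A) g h : (forall x, In x l -> g x <= h x) -> sumR l g <= sumR l h.
Proof.
  induction l as [|x l IH]; simpl; intros H; [lra|].
  apply Rplus_le_compat; auto.
Qed.

Lemma sumR_plus {A} (l : list A) g h : sumR l (fun x => g x + h x) = sumR l g + sumR l h.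
Proof. induction l as [|x l IH]; simpl; [|rewrite IH]; lra. Qed.

Lemma sumR_scal {A} (l : list A) c g : c * sumR l g = sumR l (fun x => c * g x).
Proof. induction l as [|x l IH]; simpl; [|rewrite <- IH]; lra. Qed.

Lemma sumR_const {A} (l : list A) c : sumR l (fun _ => c) = INR (length l) * c.
Proof. induction l as [|x l IH]; simpl length; [simpl; lra|]. rewrite S_INR. simpl. rewrite IH; lra. Qed.

Lemma sumR_swap {A B} (l1 : list A) (l2 : list B) g :
  sumR l1 (fun x => sumR l2 (g x)) = sumR l2 (fun y => sumR l1 (fun x => g x y)).
Proof.
  induction l1 as [|x l1 IH]; simpl.
  - induction l2 as [|y l2 IH2]; simpl; [|rewrite <- IH2]; lra.
  - rewrite IH, <- sumR_plus. reflexivity.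
Qed.

Lemma sumR_nonneg {A} (l : list A) g : (forall x, In x l -> 0 <= g x) -> 0 <= sumR l g.
Proof. intros H. rewrite <- (Rmult_0_r (INR (length l))), <- sumR_const. apply sumR_le; auto. Qed.

Lemma sumR_ge_term {A} (l : list A) g x :
  In x l -> (forall y, In y l -> 0 <= g y) -> g x <= sumR l g.
Proof.
  induction l as [|y l IH]; simpl; intros Hx Hg; [destruct Hx|].
  destruct Hx as [<-|Hx].
  - pose proof (sumR_nonneg l g (fun z Hz => Hg z (or_intror Hz))). lra.
  - pose proof (Hg y (or_introl eq_refl)). pose proof (IH Hx (fun z Hz => Hg z (or_intror Hz))). lra.
Qed.

Lemma fold_right_Rplus_map (l : list nat) (g : nat -> R) :
  fold_right Rplus 0 (map g l) = sumR l g.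
Proof. induction l as [|x l IH]; simpl; [|rewrite IH]; reflexivity. Qed.

Lemma decide_true (P : Prop) : P -> decide P = true.
Proof. unfold decide; destruct (excluded_middle_informative P); tauto. Qed.

Lemma decide_false (P : Prop) : ~ P -> decide P = false.
Proof. unfold decide; destruct (excluded_middle_informative P); tauto. Qed.

Definition ind (P : Prop) : R := if decide P then 1 else 0.

Lemma ind_true (P : Prop) : P -> ind P = 1.
Proof. intros H. unfold ind. rewrite decide_true; auto. Qed.

Lemma ind_false (P : Prop) : ~ P -> ind P = 0.
Proof. intros H. unfold ind. rewrite decide_false; auto. Qed.

Lemma ind_bounds (P : Prop) : 0 <= ind P <= 1.
Proof. unfold ind; destruct (decide P); lra. Qed.

Lemma ind_mono (P Q : Prop) : (P -> Q) -> ind P <= ind Q.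
Proof.
  intros H. destruct (classic P) as [HP|HP].
  - rewrite !ind_true; auto; lra.
  - rewrite ind_false; auto. apply ind_bounds.
Qed.

Lemma ind_or_le (P Q1 Q2 : Prop) : (P -> Q1 \/ Q2) -> ind P <= ind Q1 + ind Q2.
Proof.
  intros H. pose proof (ind_bounds Q1). pose proof (ind_bounds Q2).
  destruct (classic P) as [HP|HP]; [|rewrite ind_false by auto; lra].
  rewrite ind_true by auto.
  destruct (H HP); [rewrite (ind_true Q1) | rewrite (ind_true Q2)]; auto; lra.
Qed.

Lemma ind_exists_le (P : Prop) (l : list nat) (Q : nat -> Prop) :
  (P -> exists i, In i l /\ Q i) -> ind P <= sumR l (fun i => ind (Q i)).
Proof.
  intros H. destruct (classic P) as [HP|HP].
  - destruct (H HP) as [i [Hi HQ]]. rewrite ind_true, <- (ind_true _ HQ) by auto.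
    apply (sumR_ge_term l (fun i => ind (Q i))); auto. intros; apply ind_bounds.
  - rewrite ind_false by auto. apply sumR_nonneg; intros; apply ind_bounds.
Qed.

Lemma INR_length_filter {A} (l : list A) (P : A -> Prop) :
  INR (length (filter (fun x => decide (P x)) l)) = sumR l (fun x => ind (P x)).
Proof.
  induction l as [|x l IH]; simpl; auto. unfold ind at 1.
  destruct (decide (P x)); simpl length; rewrite ?S_INR, IH; lra.
Qed.

Lemma length_filter_le {A} (l : list A) b : (length (filter b l) <= length l)%nat.
Proof. induction l as [|x l IH]; simpl; auto. destruct (b x); simpl; lia. Qed.

Lemma length_filter_negb {A} (l : list A) (b : A -> bool) :
  (length (filter (fun x => negb (b x)) l) + length (filter b l) = length l)%nat.
Proof. induction l as [|x l IH]; simpl; auto. destruct (b x); simpl; lia. Qed.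

Lemma idx_seqs_spec n k s :
  In s (idx_seqs n k) -> length s = k /\ forall i, In i s -> (i < n)%nat.
Proof.
  revert s; induction k as [|k IH]; simpl; intros s Hs.
  - destruct Hs as [<-|[]]. split; [reflexivity | intros i []].
  - apply in_flat_map in Hs. destruct Hs as [i [Hi Hs]]. apply in_map_iff in Hs.
    destruct Hs as [s' [<- Hs']]. apply in_seq in Hi. destruct (IH s' Hs') as [H1 H2].
    simpl; split; auto. intros j [<-|Hj]; [lia|auto].
Qed.

Lemma sumR_if_count (l : list nat) (b : nat -> bool) z :
  sumR l (fun j => if b j then z else 1) =
  INR (length l) - INR (length (filter b l)) + INR (length (filter b l)) * z.
Proof.
  induction l as [|x l IH]; [simpl; lra|]. rewrite sumR_cons, IH. simpl filter.
  destruct (b x); simpl length; rewrite ?S_INR; ring.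
Qed.

Lemma sum_idx_seqs_pow n k (b : nat -> bool) (z : R) :
  let c := INR (length (filter b (seq 0 n))) in
  sumR (idx_seqs n k) (fun s => z ^ length (filter b s)) = (INR n - c + c * z) ^ k.
Proof.
  intros c. rewrite <- (length_seq n 0) at 2. unfold c. rewrite <- sumR_if_count.
  induction k as [|k IH]; simpl; [lra|].
  rewrite sumR_flat_map, <- IH, Rmult_comm, sumR_scal.
  apply sumR_ext; intros i _. rewrite sumR_map, Rmult_comm, sumR_scal.
  apply sumR_ext; intros s _. simpl. destruct (b i); simpl; lra.
Qed.

Lemma count_idx_seqs_avoiding n k (b : nat -> bool) :
  sumR (idx_seqs n k) (fun s => ind (length (filter b s) = 0%nat))
  = (INR n - INR (length (filter b (seq 0 n)))) ^ k.
Proof.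
  transitivity (sumR (idx_seqs n k) (fun s => 0 ^ length (filter b s))).
  - apply sumR_ext; intros s _. destruct (length (filter b s)); simpl.
    + apply ind_true; reflexivity.
    + rewrite ind_false by lia. ring.
  - rewrite sum_idx_seqs_pow. cbv zeta. f_equal; ring.
Qed.
Lemma exp_le_mono (x y : R) : x <= y -> exp x <= exp y.
Proof. intros [H|<-]; [left; apply exp_increasing | right]; auto. Qed.

Lemma exp_INR_mul m x : exp (INR m * x) = exp x ^ m.
Proof.
  induction m as [|m IH]; simpl pow; [rewrite Rmult_0_l, exp_0; reflexivity|].
  rewrite S_INR, Rmult_plus_distr_r, Rmult_1_l, exp_plus, IH; ring.
Qed.

Lemma nonneg_of_derive_nonneg (phi dphi : R -> R) x :
  (forall y, is_derive phi y (dphi y)) -> (forall y, 0 <= y <= x -> 0 <= dphi y) ->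
  phi 0 = 0 -> 0 <= x -> 0 <= phi x.
Proof.
  intros Hd Hpos H0 Hx.
  destruct (MVT_gen phi 0 x dphi) as [c [Hc Hmvt]].
  - intros y _; apply Hd.
  - intros y _. apply derivable_continuous_pt. exists (dphi y). apply is_derive_Reals, Hd.
  - rewrite Rmin_left, Rmax_right in Hc by lra.
    pose proof (Hpos c Hc). nra.
Qed.

Lemma bernoulli_mgf_pos (p x : R) : 0 <= p <= 1 -> 0 < 1 - p + p * exp x.
Proof. intros Hp. pose proof (exp_pos x). nra. Qed.

Lemma hoeffding_lemma (p l : R) : 0 <= p <= 1 -> 0 <= l ->
  1 - p + p * exp l <= exp (l * p + l ^ 2 / 8).
Proof.
  intros Hp Hl.
  set (g := fun x => 1 - p + p * exp x).
  assert (Hg : forall x, 0 < g x) by (intro x; apply bernoulli_mgf_pos, Hp).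
  set (dpsi := fun x => p + x / 4 - p * exp x / g x).
  assert (Hdpsi : forall x, 0 <= x -> 0 <= dpsi x).
  { intros x Hx. apply (nonneg_of_derive_nonneg dpsi
      (fun x => / 4 - (1 - p) * (p * exp x) / g x ^ 2)); auto.
    - intro y. pose proof (Hg y). unfold dpsi, g in *. auto_derive; [lra | field; lra].
    - (* AM-GM: 4 (1 - p) (p e^y) <= ((1 - p) + p e^y)^2 *)
      intros y _. pose proof (Hg y). pose proof (pow2_ge_0 (1 - p - p * exp y)).
      assert ((1 - p) * (p * exp y) <= g y ^ 2 / 4) by (unfold g in *; nra).
      cut ((1 - p) * (p * exp y) / g y ^ 2 <= / 4); [lra|].
      apply (Rmult_le_reg_r (g y ^ 2)); [apply pow_lt; lra|].
      unfold Rdiv. rewrite Rmult_assoc, Rinv_l by (apply pow_nonzero; lra). lra.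
    - unfold dpsi, g. rewrite exp_0. field_simplify; lra. }
  set (psi := fun x => x * p + x ^ 2 / 8 - ln (g x)).
  assert (0 <= psi l).
  { apply (nonneg_of_derive_nonneg psi dpsi); auto.
    - intro x. pose proof (Hg x). unfold psi, dpsi, g in *. auto_derive; [lra | field; lra].
    - intros y Hy. apply Hdpsi; lra.
    - unfold psi, g. rewrite exp_0. replace (1 - p + p * 1) with 1 by ring.
      rewrite ln_1. field. }
  unfold psi in H. change (g l <= exp (l * p + l ^ 2 / 8)).
  rewrite <- (exp_ln (g l)) by apply Hg.
  apply exp_le_mono. lra.
Qed.

(* Chernoff bound with the exponent [4 t] optimising Hoeffding's lemma. *)
Lemma count_upper_tail n k (b : nat -> bool) t : (0 < n)%nat -> 0 < t ->
  let p := INR (length (filter b (seq 0 n))) / INR n in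
  sumR (idx_seqs n k) (fun s => ind (INR k * (p + t) <= INR (length (filter b s))))
  <= INR n ^ k * exp (- (2 * INR k * t ^ 2)).
Proof.
  intros Hn Ht p.
  set (c := INR (length (filter b (seq 0 n)))) in p.
  assert (Hn' : 0 < INR n) by (apply lt_0_INR; lia).
  assert (Hc : 0 <= c <= INR n).
  { unfold c; split; [apply pos_INR|].
    rewrite <- (length_seq n 0) at 2. apply le_INR, length_filter_le. }
  assert (Hp : 0 <= p <= 1).
  { unfold p; split.
    - apply Rmult_le_pos; [lra | left; apply Rinv_0_lt_compat; lra].
    - apply (Rmult_le_reg_r (INR n)); auto. unfold Rdiv; rewrite Rmult_assoc, Rinv_l; lra. }
  set (l := 4 * t). set (a := INR k * (p + t)).
  apply Rle_trans with
    (sumR (idx_seqs n k) (fun s => exp (- (l * a)) * exp l ^ length (filter b s))).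
  { apply sumR_le; intros s _. rewrite <- exp_INR_mul, <- exp_plus.
    destruct (classic (a <= INR (length (filter b s)))) as [Ha|Ha].
    - rewrite ind_true by auto. rewrite <- exp_0. apply exp_le_mono.
      assert (0 <= l * (INR (length (filter b s)) - a)) by (apply Rmult_le_pos; unfold l; lra).
      lra.
    - rewrite ind_false by auto. left; apply exp_pos. }
  rewrite <- sumR_scal, sum_idx_seqs_pow. fold c.
  replace (INR n - c + c * exp l) with (INR n * (1 - p + p * exp l)) by (unfold p; field; lra).
  rewrite Rpow_mult_distr.
  apply Rle_trans with (exp (- (l * a)) * (INR n ^ k * exp (l * p + l ^ 2 / 8) ^ k)).
  { apply Rmult_le_compat_l; [left; apply exp_pos|].
    apply Rmult_le_compat_l; [apply pow_le; lra|].
    apply pow_incr. split; [left; apply bernoulli_mgf_pos; auto|].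
    apply hoeffding_lemma; auto. unfold l; lra. }
  rewrite <- exp_INR_mul.
  replace (exp (- (l * a)) * (INR n ^ k * exp (INR k * (l * p + l ^ 2 / 8))))
    with (INR n ^ k * (exp (- (l * a)) * exp (INR k * (l * p + l ^ 2 / 8)))) by ring.
  rewrite <- exp_plus. right. do 2 f_equal. unfold l, a. field.
Qed.

Lemma count_lower_tail n k (b : nat -> bool) t : (0 < n)%nat -> 0 < t ->
  let p := INR (length (filter b (seq 0 n))) / INR n in
  sumR (idx_seqs n k) (fun s => ind (INR (length (filter b s)) <= INR k * (p - t)))
  <= INR n ^ k * exp (- (2 * INR k * t ^ 2)).
Proof.
  intros Hn Ht p.
  assert (Hn' : 0 < INR n) by (apply lt_0_INR; lia).
  eapply Rle_trans; [|apply (count_upper_tail n k (fun j => negb (b j)) t Hn Ht)].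
  apply sumR_le; intros s Hs. apply ind_mono. destruct (idx_seqs_spec _ _ _ Hs) as [Hlen _].
  pose proof (length_filter_negb s b) as Hcs.
  pose proof (length_filter_negb (seq 0 n) b) as Hcn.
  rewrite Hlen in Hcs. rewrite length_seq in Hcn.
  apply (f_equal INR) in Hcs, Hcn. rewrite plus_INR in Hcs, Hcn.
  replace (INR (length (filter (fun j => negb (b j)) (seq 0 n))))
    with (INR n - INR (length (filter b (seq 0 n)))) by lra.
  replace ((INR n - INR (length (filter b (seq 0 n)))) / INR n) with (1 - p)
    by (unfold p; field; lra).
  lra.
Qed.

(* The oracle reveals functions, not indices, so indices are only distinguishable
   up to equality of their components. *)
Definition occ {d} (f : nat -> Fn d) (s : list nat) (i : nat) : nat :=
  length (filter (fun j => decide (f j = f i)) s).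

Definition csize {d} (f : nat -> Fn d) (n i : nat) : nat := occ f (seq 0 n) i.

Lemma occ_congr {d} (f : nat -> Fn d) s i j : f i = f j -> occ f s i = occ f s j.
Proof. intros H; unfold occ; rewrite H; reflexivity. Qed.

Lemma INR_occ {d} (f : nat -> Fn d) s i : INR (occ f s i) = sumR s (fun t => ind (f t = f i)).
Proof. apply (INR_length_filter s (fun t => f t = f i)). Qed.

Lemma csize_ge1 {d} (f : nat -> Fn d) n i : (i < n)%nat -> 1 <= INR (csize f n i).
Proof.
  intros H. unfold csize. rewrite INR_occ, <- (ind_true (f i = f i) eq_refl).
  apply (sumR_ge_term _ (fun t => ind (f t = f i))); [apply in_seq; lia|].
  intros; apply ind_bounds.
Qed.

(* Each class met in [s] contributes its [occ] occurrences with weight [csize / occ]. *)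
Lemma sumR_reweight {d} (f : nat -> Fn d) n s (phi : nat -> R) :
  (forall i j, f i = f j -> phi i = phi j) ->
  (forall i, (i < n)%nat -> occ f s i <> 0%nat) ->
  sumR s (fun t => INR (csize f n t) * phi t / INR (occ f s t)) = sumR (seq 0 n) phi.
Proof.
  intros Hphi Hseen.
  transitivity (sumR (seq 0 n)
    (fun i => sumR s (fun t => phi i / INR (occ f s i) * ind (f t = f i)))).
  - rewrite sumR_swap. apply sumR_ext; intros t _.
    unfold csize. rewrite INR_occ.
    replace (sumR (seq 0 n) (fun i => ind (f i = f t)) * phi t / INR (occ f s t))
      with (phi t / INR (occ f s t) * sumR (seq 0 n) (fun i => ind (f i = f t)))
      by (unfold Rdiv; ring).
    rewrite sumR_scal. apply sumR_ext; intros i _.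
    destruct (classic (f i = f t)) as [H|H].
    + rewrite (Hphi i t H), (occ_congr f s i t H), !ind_true; auto.
    + rewrite !ind_false; auto. ring.
  - apply sumR_ext; intros i Hi. apply in_seq in Hi.
    rewrite <- sumR_scal, <- INR_occ. field. apply not_0_INR, Hseen. lia.
Qed.

Definition cnt {d} (L : list (Fn d)) (g : Fn d) : nat :=
  length (filter (fun h => decide (h = g)) L).

Definition n_distinct {d} (L : list (Fn d)) : R := sumR L (fun g => / INR (cnt L g)).

(* If [n] distinct functions were drawn, they are the [n] components, each of
   multiplicity one.  Otherwise the multiplicity of [g] is estimated by rounding
   [n] times its empirical frequency to the nearest integer. *)
Definition est_weight {d} (n : nat) (L : list (Fn d)) (g : Fn d) : R :=
  if decide (n_distinct L = INR n) then 1
  else IZR (up (INR n * INR (cnt L g) / INR (length L) - / 2)).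

Definition est_sum {d} (n : nat) (L : list (Fn d)) : Fn d :=
  fun w => / INR n * sumR L (fun g => est_weight n L g / INR (cnt L g) * g w).

Definition eps_minimizer {d} (F : Fn d) (eps : R) (w : Vec d) : Prop :=
  exists m, is_inf F m /\ F w - m <= eps.

Definition alg {d} (n : nat) (eps : R) : algorithm d :=
  fun L => epsilon (inhabits (fun _ : Fin.t d => 0)) (eps_minimizer (est_sum n L) eps).

Lemma exists_eps_minimizer {d} (F : Fn d) eps : 0 < eps -> bounded_below F ->
  exists w, eps_minimizer F eps w.
Proof.
  intros He [b Hb].
  set (E := fun y => exists w, y = - F w).
  assert (HE : bound E) by (exists (- b); intros y [w ->]; specialize (Hb w); lra).
  assert (HE' : exists y, E y) by (exists (- F (fun _ => 0)), (fun _ => 0); reflexivity).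
  destruct (completeness E HE HE') as [M [HM1 HM2]].
  assert (Hinf : is_inf F (- M)).
  { split.
    - intros w. assert (E (- F w)) by (exists w; reflexivity). specialize (HM1 _ H). lra.
    - intros c Hc. assert (is_upper_bound E (- c)) by (intros y [w ->]; specialize (Hc w); lra).
      specialize (HM2 _ H). lra. }
  destruct (classic (exists w, F w - - M <= eps)) as [[w Hw]|Hno].
  - exists w, (- M); auto.
  - exfalso. assert (is_upper_bound E (M - eps)).
    { intros y [w ->]. destruct (Rle_dec (- F w) (M - eps)); auto.
      exfalso; apply Hno; exists w; lra. }
    specialize (HM2 _ H). lra.
Qed.

Lemma alg_not_fails {d} n eps (f : nat -> Fn d) s : 0 < eps ->
  bounded_below (finite_sum n f) ->
  (forall w, est_sum n (map f s) w = finite_sum n f w) ->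
  ~ fails n f eps (alg n eps) s.
Proof.
  intros He Hb Heq Hf.
  assert (HF : est_sum n (map f s) = finite_sum n f) by (apply functional_extensionality; auto).
  destruct (exists_eps_minimizer _ eps He Hb) as [w Hw].
  assert (Hmin : eps_minimizer (est_sum n (map f s)) eps (alg n eps (map f s))).
  { unfold alg. apply epsilon_spec. exists w. rewrite HF. exact Hw. }
  rewrite HF in Hmin. destruct Hmin as [m [Hm Hle]].
  specialize (Hf m Hm). lra.
Qed.

Lemma cnt_map {d} (f : nat -> Fn d) s i : cnt (map f s) (f i) = occ f s i.
Proof.
  unfold cnt, occ. induction s as [|t s IH]; simpl; auto.
  destruct (decide (f t = f i)); simpl; auto.
Qed.

Section Sample.

Variables (d n : nat) (f : nat -> Fn d) (s : list nat).
Hypothesis sample_range : forall t, In t s -> (t < n)%nat.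
Hypothesis all_seen : forall i, (i < n)%nat -> occ f s i <> 0%nat.

Lemma n_distinct_sample :
  n_distinct (map f s) = sumR (seq 0 n) (fun i => / INR (csize f n i)).
Proof.
  unfold n_distinct. rewrite sumR_map, <- (sumR_reweight f n s (fun i => / INR (csize f n i))).
  - apply sumR_ext; intros t Ht. rewrite cnt_map.
    pose proof (csize_ge1 f n t (sample_range t Ht)).
    assert (0 < INR (occ f s t)).
    { apply lt_0_INR. pose proof (all_seen t (sample_range t Ht)). lia. }
    field; split; lra.
  - intros i j H. unfold csize. rewrite (occ_congr f _ i j H). reflexivity.
  - exact all_seen.
Qed.

Lemma est_sum_exact :
  (forall t, In t s -> est_weight n (map f s) (f t) = INR (csize f n t)) ->
  forall w, est_sum n (map f s) w = finite_sum n f w.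
Proof.
  intros Hwt w. unfold est_sum, finite_sum. rewrite fold_right_Rplus_map. f_equal.
  rewrite sumR_map, <- (sumR_reweight f n s (fun i => f i w)).
  - apply sumR_ext; intros t Ht. rewrite Hwt, cnt_map by exact Ht. unfold Rdiv; ring.
  - intros i j H. rewrite H. reflexivity.
  - exact all_seen.
Qed.

End Sample.

Lemma all_distinct_sample_ok {d} n eps (f : nat -> Fn d) k s : 0 < eps ->
  bounded_below (finite_sum n f) -> In s (idx_seqs n k) ->
  (forall i, (i < n)%nat -> csize f n i = 1%nat) ->
  (forall i, (i < n)%nat -> occ f s i <> 0%nat) ->
  ~ fails n f eps (alg n eps) s.
Proof.
  intros He Hb Hs Hc Hseen. destruct (idx_seqs_spec _ _ _ Hs) as [_ Hrange].
  apply alg_not_fails, est_sum_exact; auto.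
  intros t Ht. rewrite (Hc t (Hrange t Ht)). unfold est_weight.
  rewrite decide_true; [reflexivity|].
  rewrite (n_distinct_sample d n f s Hrange Hseen), <- (Rmult_1_r (INR n)).
  rewrite <- (length_seq n 0) at 2. rewrite <- sumR_const.
  apply sumR_ext; intros i Hi. apply in_seq in Hi. rewrite Hc by lia. simpl; lra.
Qed.

Lemma sumR_inv_csize_le {d} (f : nat -> Fn d) n j : (j < n)%nat -> csize f n j <> 1%nat ->
  sumR (seq 0 n) (fun i => / INR (csize f n i)) <= INR n - / 2.
Proof.
  intros Hj Hcj.
  assert (Hgap : forall i, In i (seq 0 n) -> 0 <= 1 - / INR (csize f n i)).
  { intros i Hi. apply in_seq in Hi. pose proof (csize_ge1 f n i ltac:(lia)).
    cut (/ INR (csize f n i) <= / 1); [rewrite Rinv_1; lra|]. apply Rinv_le_contravar; lra. }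
  assert (Hj2 : / INR (csize f n j) <= / 2).
  { apply Rinv_le_contravar; [lra|]. pose proof (csize_ge1 f n j Hj) as H1.
    change 1 with (INR 1) in H1. apply INR_le in H1.
    change 2 with (INR 2). apply le_INR. lia. }
  pose proof (sumR_ge_term (seq 0 n) _ j ltac:(apply in_seq; lia) Hgap).
  assert (sumR (seq 0 n) (fun i => 1 - / INR (csize f n i))
          + sumR (seq 0 n) (fun i => / INR (csize f n i)) = INR n).
  { rewrite <- sumR_plus. transitivity (sumR (seq 0 n) (fun _ => 1)).
    - apply sumR_ext; intros; ring.
    - rewrite sumR_const, length_seq; ring. }
  lra.
Qed.

Definition good_estimate {d} (f : nat -> Fn d) (n k : nat) (s : list nat) (i : nat) : Prop :=
  INR (csize f n i) - / 2 <= INR n * INR (occ f s i) / INR k < INR (csize f n i) + / 2.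

Lemma round_half_up (x : R) (z : Z) : IZR z - / 2 <= x < IZR z + / 2 -> IZR (up (x - / 2)) = IZR z.
Proof. intros H. f_equal. symmetry. apply tech_up; lra. Qed.

Lemma good_estimates_ok {d} n eps (f : nat -> Fn d) k s : 0 < eps ->
  bounded_below (finite_sum n f) -> (0 < k)%nat -> In s (idx_seqs n k) ->
  (exists j, (j < n)%nat /\ csize f n j <> 1%nat) ->
  (forall i, (i < n)%nat -> good_estimate f n k s i) ->
  ~ fails n f eps (alg n eps) s.
Proof.
  intros He Hb Hk Hs [j [Hj Hcj]] Hgood. destruct (idx_seqs_spec _ _ _ Hs) as [Hlen Hrange].
  assert (Hk' : 0 < INR k) by (apply lt_0_INR; lia).
  assert (Hseen : forall i, (i < n)%nat -> occ f s i <> 0%nat).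
  { intros i Hi H0. destruct (Hgood i Hi) as [H1 _]. rewrite H0 in H1.
    pose proof (csize_ge1 f n i Hi). simpl in H1. unfold Rdiv in H1.
    rewrite Rmult_0_r, Rmult_0_l in H1. lra. }
  assert (Hdistinct : n_distinct (map f s) <> INR n).
  { rewrite (n_distinct_sample d n f s Hrange Hseen).
    pose proof (sumR_inv_csize_le f n j Hj Hcj). lra. }
  apply alg_not_fails, est_sum_exact; auto.
  intros t Ht. unfold est_weight. rewrite decide_false by exact Hdistinct.
  rewrite length_map, Hlen, cnt_map, (INR_IZR_INZ (csize f n t)). apply round_half_up.
  rewrite <- INR_IZR_INZ. apply Hgood, Hrange, Ht.
Qed.

Lemma unseen_count_le {d} (f : nat -> Fn d) n k :
  (forall i, (i < n)%nat -> csize f n i = 1%nat) ->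
  sumR (idx_seqs n k) (fun s => ind (exists i, (i < n)%nat /\ occ f s i = 0%nat))
  <= INR n * (INR n - 1) ^ k.
Proof.
  intros Hc.
  apply Rle_trans with
    (sumR (idx_seqs n k) (fun s => sumR (seq 0 n) (fun i => ind (occ f s i = 0%nat)))).
  { apply sumR_le; intros s _. apply ind_exists_le.
    intros [i [Hi H]]. exists i; split; [apply in_seq; lia | exact H]. }
  rewrite sumR_swap. right.
  rewrite <- (length_seq n 0) at 2. rewrite <- sumR_const.
  apply sumR_ext; intros i Hi. apply in_seq in Hi.
  unfold occ. rewrite count_idx_seqs_avoiding.
  change (length (filter (fun j => decide (f j = f i)) (seq 0 n))) with (csize f n i).
  rewrite Hc by lia. reflexivity.
Qed.

Lemma misestimate_count_le {d} (f : nat -> Fn d) n k i : (0 < n)%nat -> (0 < k)%nat ->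
  sumR (idx_seqs n k) (fun s => ind (~ good_estimate f n k s i))
  <= 2 * (INR n ^ k * exp (- (INR k / (2 * INR n ^ 2)))).
Proof.
  intros Hn Hk.
  assert (Hn' : 0 < INR n) by (apply lt_0_INR; lia).
  assert (Hk' : 0 < INR k) by (apply lt_0_INR; lia).
  set (b := fun j => decide (f j = f i)).
  set (t := / (2 * INR n)).
  assert (Ht : 0 < t) by (apply Rinv_0_lt_compat; lra).
  replace (- (INR k / (2 * INR n ^ 2))) with (- (2 * INR k * t ^ 2)) by (unfold t; field; lra).
  pose proof (count_lower_tail n k b t Hn Ht) as Hlow.
  pose proof (count_upper_tail n k b t Hn Ht) as Hup.
  cbv zeta in Hlow, Hup.
  eapply Rle_trans; [|rewrite <- Rplus_diag; apply Rplus_le_compat; [exact Hlow | exact Hup]].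
  rewrite <- sumR_plus. apply sumR_le; intros s _. apply ind_or_le.
  change (length (filter b s)) with (occ f s i).
  change (length (filter b (seq 0 n))) with (csize f n i).
  unfold good_estimate. set (c := INR (csize f n i)). set (X := INR (occ f s i)).
  set (y := INR n * X / INR k).
  assert (HX : X = y * INR k / INR n) by (unfold y; field; lra).
  rewrite HX.
  replace (INR k * (c / INR n - t)) with ((c - / 2) * INR k / INR n) by (unfold t; field; lra).
  replace (INR k * (c / INR n + t)) with ((c + / 2) * INR k / INR n) by (unfold t; field; lra).
  intros Hbad. destruct (Rlt_or_le y (c - / 2)) as [Hl|Hl]; [left|right];
    apply Rmult_le_compat_r, Rmult_le_compat_r; try (left; apply Rinv_0_lt_compat); lra.
Qed.

(* A class of size [c] contributes [c] terms of weight [1 / c]. *)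
Lemma class_union_bound {d} (f : nat -> Fn d) n (Q : nat -> Prop) :
  (forall i j, f i = f j -> Q i -> Q j) ->
  ind (exists i, (i < n)%nat /\ Q i)
  <= sumR (seq 0 n) (fun i => ind (Q i) / INR (csize f n i)).
Proof.
  intros HQ.
  assert (Hw : forall i, In i (seq 0 n) -> 0 < / INR (csize f n i)).
  { intros i Hi. apply in_seq in Hi. pose proof (csize_ge1 f n i ltac:(lia)).
    apply Rinv_0_lt_compat; lra. }
  destruct (classic (exists i, (i < n)%nat /\ Q i)) as [[i0 [Hi0 HQ0]]|Hno].
  - rewrite ind_true by eauto.
    pose proof (csize_ge1 f n i0 Hi0).
    replace 1 with (/ INR (csize f n i0) * sumR (seq 0 n) (fun i => ind (f i = f i0)))
      by (rewrite <- INR_occ; fold (csize f n i0); field; lra).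
    rewrite sumR_scal.
    apply sumR_le; intros i Hi. pose proof (Hw i Hi).
    destruct (classic (f i = f i0)) as [He|He].
    + unfold csize. rewrite (occ_congr f _ i i0 He), !ind_true by eauto. lra.
    + rewrite ind_false by auto. pose proof (ind_bounds (Q i)). unfold Rdiv. nra.
  - rewrite ind_false by auto. apply sumR_nonneg; intros i Hi.
    pose proof (Hw i Hi). pose proof (ind_bounds (Q i)). unfold Rdiv. nra.
Qed.

Lemma misestimate_any_count_le {d} (f : nat -> Fn d) n k j :
  (0 < n)%nat -> (0 < k)%nat -> (j < n)%nat -> csize f n j <> 1%nat ->
  sumR (idx_seqs n k) (fun s => ind (exists i, (i < n)%nat /\ ~ good_estimate f n k s i))
  <= INR n ^ k * ((2 * INR n - 1) * exp (- (INR k / (2 * INR n ^ 2)))).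
Proof.
  intros Hn Hk Hj Hcj.
  set (E := INR n ^ k * exp (- (INR k / (2 * INR n ^ 2)))).
  apply Rle_trans with (sumR (idx_seqs n k)
    (fun s => sumR (seq 0 n) (fun i => ind (~ good_estimate f n k s i) / INR (csize f n i)))).
  { apply sumR_le; intros s _. apply class_union_bound.
    intros i i' H Hbad Hgood. apply Hbad.
    unfold good_estimate, csize in *. rewrite (occ_congr f s i i' H), (occ_congr f _ i i' H).
    exact Hgood. }
  rewrite sumR_swap.
  apply Rle_trans with (sumR (seq 0 n) (fun i => / INR (csize f n i) * (2 * E))).
  { apply sumR_le; intros i Hi. apply in_seq in Hi.
    pose proof (csize_ge1 f n i ltac:(lia)).
    unfold Rdiv. rewrite (sumR_ext _ _ (fun s => / INR (csize f n i) * ind (~ good_estimate f n k s i)))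
      by (intros; ring).
    rewrite <- sumR_scal. apply Rmult_le_compat_l; [left; apply Rinv_0_lt_compat; lra|].
    apply misestimate_count_le; auto. }
  rewrite <- (sumR_ext _ (fun i => 2 * E * / INR (csize f n i))) by (intros; ring).
  rewrite <- sumR_scal.
  assert (0 <= E) by (unfold E; apply Rmult_le_pos; [apply pow_le, pos_INR | left; apply exp_pos]).
  pose proof (sumR_inv_csize_le f n j Hj Hcj).
  replace (INR n ^ k * ((2 * INR n - 1) * exp (- (INR k / (2 * INR n ^ 2)))))
    with ((2 * INR n - 1) * E) by (unfold E; ring).
  nra.
Qed.

Lemma pred_pow_le n k : (0 < n)%nat -> (INR n - 1) ^ k <= INR n ^ k * exp (- (INR k / INR n)).
Proof.
  intros Hn. assert (Hn' : 1 <= INR n) by (apply (le_INR 1); lia).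
  replace (- (INR k / INR n)) with (INR k * (- / INR n)) by (field; lra).
  rewrite exp_INR_mul, <- Rpow_mult_distr. apply pow_incr. split; [lra|].
  pose proof (exp_ineq1_le (- / INR n)).
  replace (INR n - 1) with (INR n * (1 + - / INR n)) by (field; lra).
  apply Rmult_le_compat_l; lra.
Qed.

Lemma prob_idx_le n k (E : list nat -> Prop) (c : R) : (0 < n)%nat ->
  sumR (idx_seqs n k) (fun s => ind (E s)) <= INR n ^ k * c -> prob_idx n k E <= c.
Proof.
  intros Hn H. assert (Hnk : 0 < INR n ^ k) by (apply pow_lt, lt_0_INR; lia).
  unfold prob_idx. rewrite INR_length_filter, pow_INR.
  apply (Rmult_le_reg_r (INR n ^ k)); auto. unfold Rdiv.
  rewrite Rmult_assoc, Rinv_l by lra. lra.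
Qed.

(* If every component is distinct, the algorithm can only fail when a component was
   never drawn (coupon collector); otherwise only when a multiplicity is misestimated. *)
Lemma alg_failure_prob_le {d} n eps (f : nat -> Fn d) k :
  (0 < n)%nat -> 0 < eps -> (0 < k)%nat -> bounded_below (finite_sum n f) ->
  prob_idx n k (fails n f eps (alg n eps))
  <= Rmax (INR n * exp (- (INR k / INR n)))
          ((2 * INR n - 1) * exp (- (INR k / (2 * INR n ^ 2)))).
Proof.
  intros Hn He Hk Hb. apply prob_idx_le; auto.
  destruct (classic (forall i, (i < n)%nat -> csize f n i = 1%nat)) as [Hall|Hsome].
  - apply Rle_trans with (INR n ^ k * (INR n * exp (- (INR k / INR n)))).
    2:{ apply Rmult_le_compat_l; [apply pow_le, pos_INR | apply Rmax_l]. }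
    eapply Rle_trans; [|eapply Rle_trans; [apply (unseen_count_le f n k Hall)|]].
    + apply sumR_le; intros s Hs. apply ind_mono. intros Hf. apply NNPP. intros Hseen.
      apply (all_distinct_sample_ok n eps f k s He Hb Hs Hall); [|exact Hf].
      intros i Hi H0. apply Hseen. eauto.
    + pose proof (pred_pow_le n k Hn). pose proof (pos_INR n). nra.
  - assert (Hj : exists j, (j < n)%nat /\ csize f n j <> 1%nat).
    { apply NNPP. intros Hno. apply Hsome. intros i Hi. apply NNPP. eauto. }
    destruct Hj as [j [Hj Hcj]].
    apply Rle_trans with (INR n ^ k * ((2 * INR n - 1) * exp (- (INR k / (2 * INR n ^ 2))))).
    2:{ apply Rmult_le_compat_l; [apply pow_le, pos_INR | apply Rmax_r]. }
    eapply Rle_trans; [|apply (misestimate_any_count_le f n k j Hn Hk Hj Hcj)].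
    apply sumR_le; intros s Hs. apply ind_mono. intros Hf. apply NNPP. intros Hgood.
    apply (good_estimates_ok n eps f k s He Hb Hk Hs (ex_intro _ j (conj Hj Hcj))); [|exact Hf].
    intros i Hi. apply NNPP. eauto.
Qed.

Lemma unseen_prob_lt (N K delta : R) : 1 <= N -> 0 < delta < 1 ->
  2 * N ^ 2 * ln (2 * N / delta) - 1 < K -> N * exp (- (K / N)) < delta.
Proof.
  intros HN Hd HK.
  set (L := ln (2 * N / delta)) in HK.
  assert (HeL : exp (- L) = delta / (2 * N))
    by (unfold L; rewrite exp_Ropp, exp_ln by (apply Rdiv_lt_0_compat; lra); field; lra).
  assert (HL : 0 < L).
  { unfold L. rewrite <- ln_1. apply ln_increasing; [lra|].
    apply (Rmult_lt_reg_r delta); [lra|]. unfold Rdiv. rewrite Rmult_assoc, Rinv_l; nra. }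
  assert (HKN : 2 * L - 1 < K / N).
  { apply (Rmult_lt_reg_r N); [lra|]. unfold Rdiv. rewrite Rmult_assoc, Rinv_l by lra.
    assert (N * L <= N * N * L) by (apply Rmult_le_compat_r; nra). simpl in HK. nra. }
  assert (exp (- (K / N)) < exp 1 * exp (- L) * exp (- L))
    by (rewrite <- !exp_plus; apply exp_increasing; lra).
  rewrite HeL in H. pose proof exp_le_3.
  assert (0 < delta / (2 * N)) by (apply Rdiv_lt_0_compat; lra).
  assert (exp (- (K / N)) < 3 * (delta / (2 * N)) * (delta / (2 * N))) by nra.
  apply Rlt_le_trans with (N * (3 * (delta / (2 * N)) * (delta / (2 * N)))).
  - apply Rmult_lt_compat_l; lra.
  - replace (N * (3 * (delta / (2 * N)) * (delta / (2 * N)))) with (delta * (3 * delta / (4 * N)))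
      by (field; lra).
    assert (3 * delta / (4 * N) <= 1).
    { apply (Rmult_le_reg_r (4 * N)); [lra|]. unfold Rdiv. rewrite Rmult_assoc, Rinv_l by lra. lra. }
    nra.
Qed.

Lemma misestimate_prob_lt (N K delta : R) : 1 <= N -> 0 < delta < 1 ->
  2 * N ^ 2 * ln (2 * N / delta) - 1 < K -> (2 * N - 1) * exp (- (K / (2 * N ^ 2))) < delta.
Proof.
  intros HN Hd HK.
  set (L := ln (2 * N / delta)) in HK.
  assert (HeL : exp (- L) = delta / (2 * N))
    by (unfold L; rewrite exp_Ropp, exp_ln by (apply Rdiv_lt_0_compat; lra); field; lra).
  set (x := / (2 * N ^ 2)).
  assert (Hx : 0 < x <= / 2) by (split; [apply Rinv_0_lt_compat | apply Rinv_le_contravar]; nra).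
  assert (HKx : L - x < K / (2 * N ^ 2)).
  { replace (K / (2 * N ^ 2)) with (K * x) by reflexivity.
    apply (Rmult_lt_reg_r (2 * N ^ 2)); [nra|].
    unfold x. rewrite Rmult_minus_distr_r, !Rmult_assoc, Rinv_l by nra. lra. }
  assert (Hexp : exp (- (K / (2 * N ^ 2))) < delta / (2 * N) * exp x)
    by (rewrite <- HeL, <- exp_plus; apply exp_increasing; lra).
  assert (Hex : exp x * (1 - x) <= 1).
  { pose proof (exp_ineq1_le (- x)). pose proof (exp_pos x).
    assert (exp x * exp (- x) = 1) by (rewrite <- exp_plus, Rplus_opp_r; apply exp_0).
    nra. }
  assert (HN2 : 2 * N - 1 <= 2 * N * (1 - x)).
  { unfold x. replace (2 * N * (1 - / (2 * N ^ 2))) with (2 * N - / N) by (field; lra).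
    assert (/ N <= 1) by (rewrite <- Rinv_1; apply Rinv_le_contravar; lra). lra. }
  pose proof (exp_pos x).
  assert (0 < delta / (2 * N)) by (apply Rdiv_lt_0_compat; lra).
  apply Rlt_le_trans with ((2 * N - 1) * (delta / (2 * N) * exp x)).
  { apply Rmult_lt_compat_l; lra. }
  assert ((2 * N - 1) * exp x <= 2 * N).
  { apply Rle_trans with (2 * N * (1 - x) * exp x); [apply Rmult_le_compat_r; lra|].
    replace (2 * N * (1 - x) * exp x) with (2 * N * (exp x * (1 - x))) by ring.
    rewrite <- (Rmult_1_r (2 * N)) at 2. apply Rmult_le_compat_l; lra. }
  replace ((2 * N - 1) * (delta / (2 * N) * exp x))
    with ((2 * N - 1) * exp x * (delta / (2 * N))) by ring.
  apply Rle_trans with (2 * N * (delta / (2 * N))); [apply Rmult_le_compat_r; lra|].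
  right; field; lra.
Qed.

Lemma sample_size_exists n delta : (0 < n)%nat -> 0 < delta < 1 ->
  let B := 2 * INR n ^ 2 * ln (2 * INR n / delta) in
  exists k : nat, (0 < k)%nat /\ INR k <= B /\ B - 1 < INR k.
Proof.
  intros Hn Hd B.
  assert (HN : 1 <= INR n) by (apply (le_INR 1); lia).
  assert (HL : / 2 < ln (2 * INR n / delta)).
  { apply Rlt_le_trans with (ln 2); [apply ln_lt_2|].
    apply ln_le; [lra|].
    apply (Rmult_le_reg_r delta); [lra|]. unfold Rdiv. rewrite Rmult_assoc, Rinv_l; nra. }
  assert (HB : 1 < B).
  { unfold B. assert (1 <= INR n ^ 2) by (simpl; nra). nra. }
  destruct (archimed B) as [Hup1 Hup2].
  assert (Hup : (1 <= up B)%Z) by (apply le_IZR; lra).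
  exists (Z.to_nat (up B - 1)).
  assert (Hk : INR (Z.to_nat (up B - 1)) = IZR (up B) - 1)
    by (rewrite INR_IZR_INZ, Z2Nat.id, minus_IZR by lia; reflexivity).
  rewrite Hk. repeat split; try lra. apply INR_lt. simpl. lra.
Qed.

Theorem theorem2 (d n : nat) (eps delta : R) :
  (0 < n)%nat -> 0 < eps -> 0 < delta < 1 ->
  exists k : nat,
    INR k <= 2 * INR n ^ 2 * ln (2 * INR n / delta) /\
    achieves d n k eps delta.
Proof.
  intros Hn He Hd.
  assert (HN : 1 <= INR n) by (apply (le_INR 1); lia).
  destruct (sample_size_exists n delta Hn Hd) as [k [Hk [Hk_le Hk_gt]]].
  exists k. split; [exact Hk_le|].
  exists (alg n eps), (Rmax (INR n * exp (- (INR k / INR n)))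
                            ((2 * INR n - 1) * exp (- (INR k / (2 * INR n ^ 2))))).
  split.
  - apply Rmax_lub_lt; [apply unseen_prob_lt | apply misestimate_prob_lt]; auto.
  - intros f Hb. apply alg_failure_prob_le; auto.
Qed.
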